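(* Let $\beta\in\mathcal{A}$ and $\lambda\in N_\beta$ with $\lambda_\beta=-1$ and $\sigma_X(-\mathcal{A}\lambda)<\infty$. Then the dual cone of $C_X(\mathcal{A},\lambda)$ (in $\mathbb{R}^{\mathcal{A}}$ with the standard inner product) is \[C_X(\mathcal{A},\lambda)^*=\Big\{v\in\mathbb{R}^{\mathcal{A}}_+:\ \exp(\sigma_X(-\mathcal{A}\lambda))\prod_{\alpha\in\lambda^+}v_\alpha^{\lambda_\alpha}\ge v_\beta\Big\}.\]
   Context: $X\subset\mathbb{R}^n$ is a nonempty closed convex set and $\mathcal{A}\subset\mathbb{R}^n$ a nonempty finite set. $\mathbb{R}^{\mathcal{A}}$ denotes real vectors indexed by $\mathcal{A}$. $\mathcal{A}\nu=\sum_\alpha\alpha\nu_\alpha$. $\sigma_X(y)=\sup\{y^Tx:x\in X\}$. $N_\beta=\{\nu\in\mathbb{R}^{\mathcal{A}}:\nu_\alpha\ge0\ \forall\alpha\neq\beta,\ \sum_\alpha\nu_\alpha=0\}$. $\lambda^+=\{\alpha:\lambda_\alpha>0\}$. For $\lambda\in N_\beta$ with $\lambda_\beta=-1$ and $\sigma_X(-\mathcal{A}\lambda)<\infty$, the $\lambda$-witnessed AGE cone is $C_X(\mathcal{A},\lambda)=\{c\in\mathbb{R}^{\mathcal{A}}: c_\alpha\ge0\ \forall\alpha\neq\beta,\ \prod_{\alpha\in\lambda^+}(c_\alpha/\lambda_\alpha)^{\lambda_\alpha}\ge -c_\beta\exp(\sigma_X(-\mathcal{A}\lambda))\}$. The dual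 cone of $K$ is $K^*=\{v:v^Tc\ge0\ \forall c\in K\}$. *)

From HB Require Import structures.
From mathcomp Require Import all_boot all_order all_algebra.
From mathcomp Require Import all_classical all_reals all_analysis.
Set Implicit Arguments. Unset Strict Implicit. Unset Printing Implicit Defensive.
Import Order.TTheory GRing.Theory Num.Theory.
Import numFieldNormedType.Exports.
Local Open Scope classical_set_scope.
Local Open Scope ring_scope.

Definition dotv (R : realType) (n : nat) (y x : 'rV[R]_n) : R :=
  \sum_(k < n) y 0 k * x 0 k.

Definition support_fun (R : realType) (n : nat) (X : set 'rV[R]_n)
    (y : 'rV[R]_n) : \bar R :=
  ereal_sup [set (dotv y x)%:E | x in X].

(* The finite set A of exponents is the (injective) image of a : I -> R^n;
   vectors of R^A are functions I -> R.  A nu = sum_alpha alpha nu_alpha. *)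
Definition Amul (R : realType) (n : nat) (I : finType) (a : I -> 'rV[R]_n)
    (nu : I -> R) : 'rV[R]_n :=
  \sum_(i : I) nu i *: a i.

Definition N_beta (R : realType) (I : finType) (beta : I) : set (I -> R) :=
  [set nu | (forall i, i != beta -> 0 <= nu i) /\ \sum_(i : I) nu i = 0].

(* lambda-witnessed AGE cone C_X(A, lambda); the real powers use powR
   (0 `^ t = 0 for t > 0).  exp(sigma) is expR of the (finite) real value. *)
Definition AGE_cone (R : realType) (n : nat) (X : set 'rV[R]_n) (I : finType)
    (a : I -> 'rV[R]_n) (beta : I) (lam : I -> R) : set (I -> R) :=
  [set c | (forall i, i != beta -> 0 <= c i) /\
     \prod_(i | 0 < lam i) ((c i / lam i) `^ (lam i))
       >= - c beta * expR (fine (support_fun X (- Amul a lam)))].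

Definition dual_cone (R : realType) (I : finType) (K : set (I -> R)) :
    set (I -> R) :=
  [set v | forall c, K c -> 0 <= \sum_(i : I) v i * c i].

From HB Require Import structures.
From mathcomp Require Import all_boot all_order all_algebra.
From mathcomp Require Import all_classical all_reals all_analysis.
From mathcomp Require Import lra.
Import Order.TTheory GRing.Theory Num.Theory.
Import numFieldNormedType.Exports.
Local Open Scope classical_set_scope.
Local Open Scope ring_scope.

(* The set X and the exponents only enter through the real number
   S = sigma_X(-A lambda), so we compute the dual of the cone
     C_S = { c : c_i >= 0 (i <> beta), prod_{lam_i>0} (c_i/lam_i)^lam_i >= -c_beta e^S }
   for an arbitrary real S.  Write P = { i : lam_i > 0 }; the conditions on
   lambda give beta \notin P and sum_{i in P} lam_i = 1.
   - (>=) If v >= 0 and e^S prod v_i^lam_i >= v_beta, the weighted AM-GM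
     inequality bounds sum_{i in P} v_i c_i from below by
     prod (v_i c_i/lam_i)^lam_i >= -v_beta c_beta, whence <v, c> >= 0.
   - (<=) Pairing v with unit vectors gives v >= 0.  Pairing it with the
     cone points c_beta = -1, c_i = lam_i e^{t_i} (sum lam_i t_i = S) gives
     v_beta <= sum lam_i v_i e^{t_i}; choosing t_i = S + m - ln v_i with
     m = sum lam_i ln v_i yields the claim when all v_i > 0 (i in P), and
     letting the remaining t_i tend to -oo yields v_beta <= 0 otherwise. *)

Section AMGM.
Context {R : realType}.

Lemma prod_powR_expR (I : finType) (P : pred I) (w y : I -> R) :
  (forall i, P i -> 0 < y i) ->
  \prod_(i | P i) y i `^ w i = expR (\sum_(i | P i) w i * ln (y i)).
Proof.
move=> y_gt0; rewrite expR_sum; apply: eq_bigr => i Pi.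
by rewrite /powR gt_eqF ?y_gt0.
Qed.

(* Weighted AM-GM: the weighted geometric mean is below the arithmetic one.
   For positive y it follows from the tangent bound e^x >= 1 + x at the
   point m = sum w_i ln y_i. *)
Lemma weighted_amgm (I : finType) (P : pred I) (w y : I -> R) :
  (forall i, P i -> 0 < w i) -> \sum_(i | P i) w i = 1 ->
  (forall i, P i -> 0 <= y i) ->
  \prod_(i | P i) y i `^ w i <= \sum_(i | P i) w i * y i.
Proof.
move=> w_gt0 w_sum1 y_ge0.
have rhs_ge0 : 0 <= \sum_(i | P i) w i * y i.
  by apply: sumr_ge0 => i Pi; rewrite mulr_ge0 ?y_ge0 // ltW ?w_gt0.
case: (pselect (exists2 i, P i & y i = 0)) => [[i Pi yi0]|no_zero].
  by rewrite (bigD1 i Pi) /= yi0 powR0 ?gt_eqF ?w_gt0 // mul0r.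
have y_gt0 i : P i -> 0 < y i.
  move=> Pi; rewrite lt_neqAle y_ge0 // andbT eq_sym.
  by apply/eqP => yi0; apply: no_zero; exists i.
rewrite prod_powR_expR //; set m := \sum_(i | P i) _.
have tangent i : P i -> expR m * (1 + (ln (y i) - m)) <= y i.
  move=> Pi; have {2}-> : y i = expR m * expR (ln (y i) - m).
    by rewrite -expRD addrC subrK lnK // posrE y_gt0.
  by rewrite ler_wpM2l ?expR_ge0 // expR_ge1Dx.
have mean_tangent : \sum_(i | P i) w i * (1 + (ln (y i) - m)) = 1.
  under eq_bigr do rewrite mulrDr mulr1 mulrBr.
  by rewrite big_split /= sumrB w_sum1 -/m -mulr_suml w_sum1 mul1r addrA addrK.
apply: (@le_trans _ _ (\sum_(i | P i) w i * (expR m * (1 + (ln (y i) - m))))).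
  by under eq_bigr do rewrite mulrCA; rewrite -mulr_sumr mean_tangent mulr1.
by apply: ler_sum => i Pi; rewrite ler_wpM2l ?tangent // ltW ?w_gt0.
Qed.

Lemma le0_of_le_mul_expR {x k : R} :
  0 <= k -> (forall u, x <= k * expR u) -> x <= 0.
Proof.
move=> k_ge0 x_le; rewrite leNgt; apply/negP => x_gt0.
have k1_gt0 : 0 < k + 1 by lra.
have := x_le (ln (x / (k + 1))); rewrite lnK ?posrE ?divr_gt0 //.
have q_gt0 : 0 < x / (k + 1) by rewrite divr_gt0.
have : x / (k + 1) * (k + 1) = x by rewrite divfK // gt_eqF.
set q := x / (k + 1) => q_def; nra.
Qed.

End AMGM.

Section AGEDual.
Variables (R : realType) (I : finType) (beta : I) (lam : I -> R) (S : R).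
Hypothesis lam_N : N_beta beta lam.
Hypothesis lam_beta : lam beta = -1.

Definition age_cone : set (I -> R) :=
  [set c | (forall i, i != beta -> 0 <= c i) /\
     \prod_(i | 0 < lam i) ((c i / lam i) `^ (lam i)) >= - c beta * expR S].

Definition age_dual : set (I -> R) :=
  [set v | (forall i, 0 <= v i) /\
     expR S * \prod_(i | 0 < lam i) (v i `^ (lam i)) >= v beta].

Lemma lam_pos_neq_beta {i} : 0 < lam i -> i != beta.
Proof. by apply: contraTneq => ->; rewrite lam_beta ltr0N1. Qed.

Lemma sum_lam_pos : \sum_(i | 0 < lam i) lam i = 1.
Proof.
case: lam_N => lam_ge0 lam_sum.
move: lam_sum; rewrite (bigID (fun i => 0 < lam i)) /=.
rewrite [X in _ + X](bigD1 beta) /=; last by rewrite lam_beta ltr0N1.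
rewrite [X in _ + (_ + X)]big1 ?lam_beta; first by move=> ?; lra.
move=> i /andP[not_pos /lam_ge0]; rewrite le_eqVlt (negbTE not_pos) orbF.
by move=> /eqP <-.
Qed.

Lemma pos_part_pairing_ge {v c} : age_dual v -> age_cone c -> c beta < 0 ->
  - (v beta * c beta) <= \sum_(i | 0 < lam i) v i * c i.
Proof.
move=> [v_ge0 v_ineq] [c_ge0 c_ineq] cb_lt0.
have c_pos_ge0 i : 0 < lam i -> 0 <= c i.
  by move=> /lam_pos_neq_beta; exact: c_ge0.
have reweight : \sum_(i | 0 < lam i) v i * c i =
    \sum_(i | 0 < lam i) lam i * (v i * c i / lam i).
  by apply: eq_bigr => i li; rewrite [RHS]mulrC divfK // gt_eqF.
have split_prod : \prod_(i | 0 < lam i) (v i * c i / lam i) `^ lam i =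
    \prod_(i | 0 < lam i) v i `^ lam i *
    \prod_(i | 0 < lam i) (c i / lam i) `^ lam i.
  rewrite -big_split /=; apply: eq_bigr => i li.
  by rewrite -mulrA powRM // divr_ge0 ?c_pos_ge0 // ltW.
rewrite reweight.
apply: (@le_trans _ _ (\prod_(i | 0 < lam i) (v i * c i / lam i) `^ lam i)).
  have ncb_ge0 : 0 <= - c beta by rewrite oppr_ge0 ltW.
  have := ler_wpM2l ncb_ge0 v_ineq.
  rewrite split_prod; set pv := \prod_(i | _) v i `^ _ => scaled_ineq.
  have pv_ge0 : 0 <= pv by apply: prodr_ge0 => i _; exact: powR_ge0.
  apply: (@le_trans _ _ (pv * (- c beta * expR S))); last exact: (ler_wpM2l pv_ge0 c_ineq).
  nra.
apply: weighted_amgm sum_lam_pos _ => // i li.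
by rewrite divr_ge0 ?mulr_ge0 ?c_pos_ge0 // ltW.
Qed.

(* Inclusion (>=): only the case c_beta < 0 needs the AM-GM step. *)
Lemma age_dual_sub : age_dual `<=` dual_cone age_cone.
Proof.
move=> v v_dual c c_cone; have [v_ge0 _] := v_dual; have [c_ge0 _] := c_cone.
have [cb_ge0|cb_lt0] := lerP 0 (c beta).
  apply: sumr_ge0 => i _; apply: mulr_ge0 => //.
  by case: (eqVneq i beta) => [->|/c_ge0].
have pos_le_rest : \sum_(i | 0 < lam i) v i * c i <=
    \sum_(i | i != beta) v i * c i.
  rewrite [X in _ <= X](bigID (fun i => 0 < lam i)) /=.
  rewrite [X in _ <= X + _](eq_bigl (fun i => 0 < lam i)); last first.
    by move=> i; case li: (0 < lam i); rewrite ?andbF ?andbT ?lam_pos_neq_beta.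
  rewrite lerDl; apply: sumr_ge0 => i /andP[ib _].
  by rewrite mulr_ge0 ?c_ge0.
have := pos_part_pairing_ge v_dual c_cone cb_lt0.
rewrite [X in _ -> _ <= X](bigD1 beta) //=; lra.
Qed.

(* Pairing with unit vectors: elements of the dual cone are nonnegative. *)
Lemma dual_ge0 {v} : dual_cone age_cone v -> forall i, 0 <= v i.
Proof.
move=> v_dual i.
have pick_i : \sum_j v j * (j == i)%:R = v i.
  rewrite (bigD1 i) //= eqxx mulr1 big1 ?addr0 // => j /negbTE ->.
  by rewrite mulr0.
rewrite -pick_i; apply: v_dual; split; first by move=> j _; case: (j == i).
apply: (@le_trans _ _ 0); last by apply: prodr_ge0 => j _; exact: powR_ge0.
by rewrite mulNr oppr_le0 mulr_ge0 ?expR_ge0 ?ler0n.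
Qed.

(* Pairing with the cone points c_beta = -1, c_i = lam_i e^{t_i} (i in P),
   which lie on the boundary of the cone when sum_P lam_i t_i = S. *)
Lemma dual_test_ineq {v} (t : I -> R) : dual_cone age_cone v ->
  \sum_(i | 0 < lam i) lam i * t i = S ->
  v beta <= \sum_(i | 0 < lam i) lam i * v i * expR (t i).
Proof.
move=> v_dual t_sum.
pose c i := - (i == beta)%:R + (if 0 < lam i then lam i * expR (t i) else 0).
have pairing : \sum_i v i * c i =
    - v beta + \sum_(i | 0 < lam i) lam i * v i * expR (t i).
  rewrite /c; under eq_bigr do rewrite mulrDr.
  rewrite big_split /=; congr (_ + _).
    rewrite (bigD1 beta) //= eqxx mulrN1 big1 ?addr0 // => j /negbTE ->.
    by rewrite oppr0 mulr0.
  rewrite [RHS]big_mkcond /=; apply: eq_bigr => i _.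
  by case: ifP => _; rewrite ?mulr0 // mulrCA mulrA.
suff : 0 <= \sum_i v i * c i by rewrite pairing; lra.
apply: v_dual; split.
  move=> i /negbTE ib; rewrite /c ib oppr0 add0r.
  by case: ifP => // li; rewrite mulr_ge0 ?expR_ge0 // ltW.
have -> : \prod_(i | 0 < lam i) (c i / lam i) `^ lam i = expR S.
  rewrite -t_sum expR_sum; apply: eq_bigr => i li.
  rewrite /c li (negbTE (lam_pos_neq_beta li)) oppr0 add0r mulrC mulKf.
    by rewrite -expRM mulrC.
  by rewrite gt_eqF.
by rewrite /c eqxx lam_beta ltr0N1 addr0 opprK mul1r.
Qed.

(* If v vanishes at some i0 in P, sending t_i -> -oo for i in P \ {i0}
   (and compensating with t_{i0}) forces v_beta <= 0. *)
Lemma dual_beta_le0 {v i0} : dual_cone age_cone v ->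
  0 < lam i0 -> v i0 = 0 -> v beta <= 0.
Proof.
move=> v_dual li0 vi0; have v_ge0 := dual_ge0 v_dual.
set k := \sum_(i | 0 < lam i) lam i * v i.
have k_ge0 : 0 <= k by apply: sumr_ge0 => i li; rewrite mulr_ge0 // ltW.
have rest_sum : \sum_(j | (0 < lam j) && (j != i0)) lam j = 1 - lam i0.
  by move: sum_lam_pos; rewrite (bigD1 i0) //=; lra.
apply: (le0_of_le_mul_expR k_ge0) => u.
pose t j := if j == i0 then (S - u * (1 - lam i0)) / lam i0 else u.
apply: le_trans (dual_test_ineq t v_dual _) _.
  rewrite (bigD1 i0) //= /t eqxx mulrC divfK ?gt_eqF //.
  rewrite (eq_bigr (fun j => lam j * u)); last by move=> j /andP[_ /negbTE ->].
  by rewrite -mulr_suml rest_sum [(1 - _) * u]mulrC subrK.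
rewrite /k mulr_suml; apply: ler_sum => j lj.
by case: (eqVneq j i0) => [->|ji0]; rewrite /t ?eqxx ?(negbTE ji0) ?vi0 ?mulr0 ?mul0r.
Qed.

(* If v > 0 on P, the choice t_i = S + m - ln v_i makes every term of the
   test inequality equal to lam_i e^{S + m}, with e^m = prod v_i^lam_i. *)
Lemma dual_beta_le_pos {v} : dual_cone age_cone v ->
  (forall i, 0 < lam i -> 0 < v i) ->
  v beta <= expR S * \prod_(i | 0 < lam i) v i `^ lam i.
Proof.
move=> v_dual v_gt0.
set m := \sum_(i | 0 < lam i) lam i * ln (v i).
rewrite prod_powR_expR // -/m -expRD.
apply: le_trans (dual_test_ineq (fun i => S + m - ln (v i)) v_dual _) _.
  under eq_bigr do rewrite mulrBr.
  by rewrite sumrB -mulr_suml sum_lam_pos mul1r -/m addrK.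
rewrite (eq_bigr (fun i => lam i * expR (S + m))); last first.
  move=> i li; rewrite expRB lnK ?posrE ?v_gt0 // -mulrA [v i * _]mulrC.
  by rewrite divfK // gt_eqF ?v_gt0.
by rewrite -mulr_suml sum_lam_pos mul1r.
Qed.

Lemma dual_sub_age_dual : dual_cone age_cone `<=` age_dual.
Proof.
move=> v v_dual; have v_ge0 := dual_ge0 v_dual; split => //.
case: (pselect (exists2 i0, 0 < lam i0 & v i0 = 0)) => [[i0 li0 vi0]|no_zero].
  apply: le_trans (dual_beta_le0 v_dual li0 vi0) _.
  by rewrite mulr_ge0 ?expR_ge0 // prodr_ge0 // => i _; exact: powR_ge0.
apply: dual_beta_le_pos => // i li; rewrite lt_neqAle v_ge0 andbT eq_sym.
by apply/eqP => vi0; apply: no_zero; exists i.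
Qed.

Theorem age_cone_dual : dual_cone age_cone = age_dual.
Proof. by rewrite eqEsubset; split; [exact: dual_sub_age_dual | exact: age_dual_sub]. Qed.

End AGEDual.

Theorem proposition4p7 (R : realType) (n : nat) (X : set 'rV[R]_n)
    (I : finType) (a : I -> 'rV[R]_n) (beta : I) (lam : I -> R) :
  X !=set0 -> closed X -> convex_set (X : set (convex_lmodType 'rV[R]_n)) ->
  injective a ->
  N_beta beta lam -> lam beta = -1 ->
  (support_fun X (- Amul a lam) < +oo)%E ->
  dual_cone (AGE_cone X a beta lam) =
  [set v | (forall i, 0 <= v i) /\
     expR (fine (support_fun X (- Amul a lam)))
       * \prod_(i | 0 < lam i) (v i `^ (lam i)) >= v beta].
Proof.
move=> _ _ _ _ lam_N lam_beta _.
exact: (@age_cone_dual R I beta lam (fine (support_fun X (- Amul a lam))) lam_N lam_beta).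
Qed.
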